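(* Let $a,b,d>0$, $c>c_-$, and $\phi(x)=\frac{ax^3+bx^2+cx+d}{x^3}$, $x>0$. If $p$ is a prime period two solution of $\phi$ (i.e. $\phi(\phi(p))=p$ and $\phi(p)\neq p$), then $p$ is a zero of the sixth order polynomial $$G(x)=a^3x^6+(2a^2b-ac-d)x^5+(ab^2-ad-bc+2a^2c)x^4+(2a^2d+2abc-c^2-bd)x^3+(ac^2+2abd-2cd)x^2+(2acd-d^2)x+ad^2.$$ Consequently $\phi$ has at most three $2$-cycles.
   Context: $c_-$ is the unique negative zero of $Q(x)=4ax^3-b^2x^2-18abd\,x+27a^2d^2+4db^3$. A 2-cycle of $\phi$ is a pair $(p,\phi(p))$ where $p$ is a prime period two solution. *)

From HB Require Import structures.
From mathcomp Require Import all_boot all_order all_algebra.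
Set Implicit Arguments. Unset Strict Implicit. Unset Printing Implicit Defensive.
Import Order.TTheory GRing.Theory Num.Theory.
Local Open Scope ring_scope.

Definition Qpol (R : realFieldType) (a b d x : R) : R :=
  4 * a * x ^+ 3 - b ^+ 2 * x ^+ 2 - 18 * a * b * d * x
  + 27 * a ^+ 2 * d ^+ 2 + 4 * d * b ^+ 3.

Definition phi (R : realFieldType) (a b c d x : R) : R :=
  (a * x ^+ 3 + b * x ^+ 2 + c * x + d) / x ^+ 3.

Definition Gpol (R : realFieldType) (a b c d x : R) : R :=
  a ^+ 3 * x ^+ 6 + (2 * a ^+ 2 * b - a * c - d) * x ^+ 5
  + (a * b ^+ 2 - a * d - b * c + 2 * a ^+ 2 * c) * x ^+ 4
  + (2 * a ^+ 2 * d + 2 * a * b * c - c ^+ 2 - b * d) * x ^+ 3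
  + (a * c ^+ 2 + 2 * a * b * d - 2 * c * d) * x ^+ 2
  + (2 * a * c * d - d ^+ 2) * x + a * d ^+ 2.

(* p is a prime period two solution of phi on (0, oo):
   p > 0, phi p > 0 (so phi (phi p) is defined), phi (phi p) = p, phi p <> p *)
Definition prime_period_two (R : realFieldType) (a b c d p : R) : Prop :=
  0 < p /\ 0 < phi a b c d p /\ phi a b c d (phi a b c d p) = p
  /\ phi a b c d p <> p.

From HB Require Import structures.
From mathcomp Require Import all_boot all_order all_algebra.
From mathcomp Require Import ring.
Set Implicit Arguments. Unset Strict Implicit. Unset Printing Implicit Defensive.
Import Order.TTheory GRing.Theory Num.Theory.
Local Open Scope ring_scope.

(* Write N(x) = a x^3 + b x^2 + c x + d, so that q = phi p means N(p) = q p^3.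
   For a 2-cycle (p, q) subtracting N(p) = q p^3 from N(q) = p q^3 leaves a
   multiple of q - p, and the cofactor is a quadratic H(p, q) in q, which
   therefore vanishes.  Substituting q = N(p) / p^3 gives G(p) = p^6 H(p, q),
   so every prime period two point is a root of the degree 6 polynomial G.
   A 2-cycle contributes two distinct roots, hence there are at most three. *)

Section TwoCycles.

Variables (R : realFieldType) (a b c d : R).

Local Notation phi := (phi a b c d).

Definition cycle2_quadratic (p q : R) : R :=
  q ^+ 2 * (a - p) + q * (a * p + b - p ^+ 2) + (a * p ^+ 2 + b * p + c).

Lemma phiK_cube {x : R} : x != 0 ->
  phi x * x ^+ 3 = a * x ^+ 3 + b * x ^+ 2 + c * x + d.
Proof. by move=> x0; rewrite /phi divfK // expf_neq0. Qed.

Lemma Gpol_phi (p : R) : p != 0 ->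
  Gpol a b c d p = p ^+ 6 * cycle2_quadratic p (phi p).
Proof.
move=> p0; have := phiK_cube p0; set q := phi p; set N := _ + d => hq.
transitivity (N ^+ 2 * (a - p) + N * p ^+ 3 * (a * p + b - p ^+ 2)
              + p ^+ 6 * (a * p ^+ 2 + b * p + c)).
  by rewrite /Gpol /N; ring.
by rewrite -hq /cycle2_quadratic; ring.
Qed.

Lemma cycle2_quadratic_eq0 (p : R) :
  prime_period_two a b c d p -> cycle2_quadratic p (phi p) = 0.
Proof.
case=> p_gt0 [q_gt0 [qq_p q_neq_p]].
have hp := phiK_cube (lt0r_neq0 p_gt0).
have hq := phiK_cube (lt0r_neq0 q_gt0); rewrite qq_p in hq.
set q := phi p in hp hq q_neq_p *.
have : (q - p) * cycle2_quadratic p q = 0.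
  transitivity ((q * p ^+ 3 - (a * p ^+ 3 + b * p ^+ 2 + c * p + d))
                - (p * q ^+ 3 - (a * q ^+ 3 + b * q ^+ 2 + c * q + d))).
    by rewrite /cycle2_quadratic; ring.
  by rewrite hp hq !subrr.
by move/eqP; rewrite mulf_eq0 subr_eq0 (negPf (introN eqP q_neq_p)) => /eqP.
Qed.

Lemma Gpol_prime_period_two (p : R) :
  prime_period_two a b c d p -> Gpol a b c d p = 0.
Proof.
move=> pp2; have [p_gt0 _] := pp2.
by rewrite Gpol_phi ?lt0r_neq0 // cycle2_quadratic_eq0 // mulr0.
Qed.

Lemma prime_period_two_phi (p : R) :
  prime_period_two a b c d p -> prime_period_two a b c d (phi p).
Proof.
case=> p_gt0 [q_gt0 [qq_p q_neq_p]].
by rewrite /prime_period_two qq_p; do !split=> //; move/esym.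
Qed.

Definition Gpoly : {poly R} :=
  Poly [:: a * d ^+ 2; 2 * a * c * d - d ^+ 2;
          a * c ^+ 2 + 2 * a * b * d - 2 * c * d;
          2 * a ^+ 2 * d + 2 * a * b * c - c ^+ 2 - b * d;
          a * b ^+ 2 - a * d - b * c + 2 * a ^+ 2 * c;
          2 * a ^+ 2 * b - a * c - d; a ^+ 3].

Lemma horner_Gpoly (x : R) : Gpoly.[x] = Gpol a b c d x.
Proof. by rewrite /Gpoly horner_Poly /= /Gpol; ring. Qed.

Lemma size_Gpoly : (size Gpoly <= 7)%N.
Proof. exact: size_Poly. Qed.

Lemma Gpoly_neq0 : a != 0 -> Gpoly != 0.
Proof.
move=> a0; apply/eqP => G0; have := coef0 R 6; rewrite -G0 coef_Poly /=.
by apply/eqP; rewrite expf_neq0.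
Qed.

End TwoCycles.

Lemma uniq_cat_map_cycles (T : eqType) (f : T -> T) (s : seq T) :
  {in s, cancel f f} -> uniq s ->
  (forall p q, p \in s -> q \in s -> q <> f p) ->
  uniq (s ++ map f s).
Proof.
move=> fK s_uniq s_sep.
rewrite cat_uniq (map_inj_in_uniq (can_in_inj fK)) s_uniq andbT /=.
apply/hasPn => _ /mapP [p ps ->].
by apply/negP => fps; apply: (s_sep p (f p)).
Qed.

Theorem lemma1 (R : realFieldType) (a b c d cm : R) :
  0 < a -> 0 < b -> 0 < d ->
  cm < 0 -> Qpol a b d cm = 0 ->
  (forall y : R, y < 0 -> Qpol a b d y = 0 -> y = cm) ->
  cm < c ->
  (forall p : R, prime_period_two a b c d p -> Gpol a b c d p = 0) /\
  (forall s : seq R,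
      (forall p, p \in s -> prime_period_two a b c d p) ->
      uniq s ->
      (forall p q, p \in s -> q \in s -> q <> phi a b c d p) ->
      (size s <= 3)%N).
Proof.
move=> a_gt0 _ _ _ _ _ _; split=> [|s s_pp2 s_uniq s_sep].
  exact: Gpol_prime_period_two.
have roots_G : all (root (Gpoly a b c d)) (s ++ map (phi a b c d) s).
  rewrite all_cat all_map; apply/andP; split; apply/allP => p /s_pp2 pp2;
    rewrite /= /root horner_Gpoly Gpol_prime_period_two //.
  exact: prime_period_two_phi.
have phiK : {in s, cancel (phi a b c d) (phi a b c d)}.
  by move=> p /s_pp2 [_ [_ []]].
have := max_poly_roots (Gpoly_neq0 b c d (lt0r_neq0 a_gt0)) roots_G
  (uniq_cat_map_cycles phiK s_uniq s_sep).
rewrite size_cat size_map => /leq_trans/(_ (size_Gpoly a b c d)).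
by rewrite ltnS addnn -[6%N]/(3.*2) leq_double.
Qed.
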